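(* Let $F$ be a CNF formula over variables $x_1,\dots,x_n$ with clauses $C_1,\dots,C_m$, each containing two or three literals. Let $H=(V,A)$ be the 1-2-directed hypergraph constructed from $F$ as described in the context. Then $H$ contains an acyclic path from the node $\{\alpha,\beta\}$ to the node $\{c_{m+1},\gamma\}$ if and only if $F$ has a satisfying truth assignment.
   Context: **Triples and arcs.** A rooted triple $pq|o$, with $p,q,o$ distinct leaf labels and unordered in $p,q$, corresponds to the hyperarc $\mathrm{arc}(pq|o)= \{p,q\}\to\{\{p,o\},\{q,o\}\}$. Thus hypergraph nodes are unordered pairs of leaves; we write $pq$ for $\{p,q\}$. **Hypergraph notions.** A hyperarc $u\to\{v,v'\}$ has tail $u$ and heads $\{v,v'\}$. A path from $u_0$ to $u_\ell$ is a sequence $(a_1,\dots,a_\ell)$ of distinct hyperarcs with $\mathrm{t}(a_1)=u_0$, $u_\ell\in\mathrm{h}(a_\ell)$, and $\mathrm{t}(a_{k+1})\in\mathrm{h}(a_k)$ for all $k$. It is acyclic if no $a_k$ has a head equal to $\mathrm{t}(a_{k'})$ for some $k'<k$. **Construction.** Use leaves - $x_i^j,\bar x_i^j,y_i^j,\bar y_i^j$ for $i\in[n]$, $j\in[m]$; - $b_i,b'_i$ for $i\in[n+1]$; - $c_j,d_j$ for $j\in[m]$; - $c_{m+1}$, and $\alpha,\beta,\gamma$. The triple set $R$ is the union of the following groups. (i) Positive side of the gadget for each $i\in[n]$: - $b_ib'_i|x_i^1$ and $b'_ix_i^1|y_i^1$; - $x_i^jy_i^j|x_i^{j+1}$ and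 $y_i^jx_i^{j+1}|y_i^{j+1}$ for $1\le j\le m-1$; - $x_i^my_i^m|b_{i+1}$ and $y_i^mb_{i+1}|b'_{i+1}$. (ii) Negative side of the gadget for each $i\in[n]$: - $b_ib'_i|\bar x_i^1$ and $b'_i\bar x_i^1|\bar y_i^1$; - $\bar x_i^j\bar y_i^j|\bar x_i^{j+1}$ and $\bar y_i^j\bar x_i^{j+1}|\bar y_i^{j+1}$ for $1\le j\le m-1$; - $\bar x_i^m\bar y_i^m|b_{i+1}$ and $\bar x_i^mb_{i+1}|b'_{i+1}$. (iii) For each clause $C_j$: - for each positive occurrence of $x_i$ in $C_j$, the triples $c_jd_j|x_i^j$, $c_jx_i^j|y_i^j$, $c_jy_i^j|c_{j+1}$; - for each negative occurrence of $x_i$ in $C_j$, the triples $c_jd_j|\bar x_i^j$, $c_j\bar x_i^j|\bar y_i^j$, $c_j\bar y_i^j|c_{j+1}$; - if $j<m$, the triple $c_jc_{j+1}|d_{j+1}$. (iv) Connecting triples: $\alpha\beta|b_1$, $\beta b_1|b'_1$, $b_{n+1}b'_{n+1}|c_1$, $b'_{n+1}c_1|d_1$, $c_mc_{m+1}|\gamma$. Then $A=\{\mathrm{arc}(t):t\in R\}$, and $V$ is the set of all leaf pairs occurring as a tail or head of an arc in $A$. *)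

From HB Require Import structures.
From mathcomp Require Import all_boot.
From mathcomp Require Import finmap.

Set Implicit Arguments.
Unset Strict Implicit.
Unset Printing Implicit Defensive.

Local Open Scope fset_scope.

(* ---------- Leaf labels of the construction (indices are 1-based nats) ---------- *)
Inductive leaf : Type :=
  | LX  (i j : nat)
  | LXb (i j : nat)
  | LY  (i j : nat)
  | LYb (i j : nat)
  | LB  (i : nat)
  | LB' (i : nat)
  | LC  (j : nat)
  | LD  (j : nat)
  | LAlpha | LBeta | LGamma.

Definition leaf_enc (l : leaf) : nat * (nat * nat) :=
  match l with
  | LX i j => (0, (i, j)) | LXb i j => (1, (i, j))
  | LY i j => (2, (i, j)) | LYb i j => (3, (i, j))
  | LB i => (4, (i, 0)) | LB' i => (5, (i, 0))
  | LC j => (6, (j, 0)) | LD j => (7, (j, 0))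
  | LAlpha => (8, (0, 0)) | LBeta => (9, (0, 0)) | LGamma => (10, (0, 0))
  end.

Definition leaf_dec (t : nat * (nat * nat)) : option leaf :=
  match t with
  | (0, (i, j)) => Some (LX i j) | (1, (i, j)) => Some (LXb i j)
  | (2, (i, j)) => Some (LY i j) | (3, (i, j)) => Some (LYb i j)
  | (4, (i, _)) => Some (LB i) | (5, (i, _)) => Some (LB' i)
  | (6, (j, _)) => Some (LC j) | (7, (j, _)) => Some (LD j)
  | (8, _) => Some LAlpha | (9, _) => Some LBeta | (10, _) => Some LGamma
  | _ => None
  end.

Lemma leaf_encK : pcancel leaf_enc leaf_dec.
Proof. by case. Qed.

HB.instance Definition _ := Countable.copy leaf (pcan_type leaf_encK).

Definition node := {fset leaf}.
Definition pr (p q : leaf) : node := [fset p; q].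

Definition harc := (node * {fset node})%type.
Definition tl (a : harc) : node := a.1.
Definition hds (a : harc) : {fset node} := a.2.

(* A rooted triple pq|o, stored as (p, q, o). *)
Definition triple := (leaf * leaf * leaf)%type.

Definition arc (t : triple) : harc :=
  let: (p, q, o) := t in (pr p q, [fset pr p o; pr q o]).

(* A literal (i, true) is x_i, (i, false) is the negation of x_i.
   A formula is the list of its clauses C_1, ..., C_m (m = size F). *)
Definition literal := (nat * bool)%type.
Definition clause := seq literal.
Definition cnf := seq clause.

Definition wf_cnf (n : nat) (F : cnf) : Prop :=
  forall C, C \in F ->
    [/\ uniq C, (size C == 2) || (size C == 3)
      & forall l, l \in C -> 1 <= l.1 <= n].

Definition satisfies (v : nat -> bool) (F : cnf) : Prop :=
  forall C, C \in F -> exists2 l, l \in C & v l.1 = l.2.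

Section Construction.
Variables (n : nat) (F : cnf).
Let m := size F.

Definition pos_gadget (i : nat) : seq triple :=
  [:: (LB i, LB' i, LX i 1); (LB' i, LX i 1, LY i 1)]
  ++ flatten [seq [:: (LX i j, LY i j, LX i j.+1); (LY i j, LX i j.+1, LY i j.+1)]
             | j <- iota 1 (m - 1)]
  ++ [:: (LX i m, LY i m, LB i.+1); (LY i m, LB i.+1, LB' i.+1)].

Definition neg_gadget (i : nat) : seq triple :=
  [:: (LB i, LB' i, LXb i 1); (LB' i, LXb i 1, LYb i 1)]
  ++ flatten [seq [:: (LXb i j, LYb i j, LXb i j.+1); (LYb i j, LXb i j.+1, LYb i j.+1)]
             | j <- iota 1 (m - 1)]
  ++ [:: (LXb i m, LYb i m, LB i.+1); (LXb i m, LB i.+1, LB' i.+1)].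

Definition lit_triples (j : nat) (l : literal) : seq triple :=
  let: (i, b) := l in
  if b then [:: (LC j, LD j, LX i j); (LC j, LX i j, LY i j); (LC j, LY i j, LC j.+1)]
  else [:: (LC j, LD j, LXb i j); (LC j, LXb i j, LYb i j); (LC j, LYb i j, LC j.+1)].

Definition clause_triples (j : nat) : seq triple :=
  flatten [seq lit_triples j l | l <- nth [::] F j.-1]
  ++ (if j < m then [:: (LC j, LC j.+1, LD j.+1)] else [::]).

Definition connect_triples : seq triple :=
  [:: (LAlpha, LBeta, LB 1); (LBeta, LB 1, LB' 1);
      (LB n.+1, LB' n.+1, LC 1); (LB' n.+1, LC 1, LD 1);
      (LC m, LC m.+1, LGamma)].

Definition R : seq triple :=
  flatten [seq pos_gadget i | i <- iota 1 n]
  ++ flatten [seq neg_gadget i | i <- iota 1 n]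
  ++ flatten [seq clause_triples j | j <- iota 1 m]
  ++ connect_triples.

Definition A : seq harc := [seq arc t | t <- R].

Definition V : seq node := flatten [seq tl a :: hds a | a <- A].

End Construction.

Definition arc0 : harc := (fset0, fset0).

Definition is_path (Ar : seq harc) (s : seq harc) (u v : node) : Prop :=
  [/\ s != [::],
      all (fun a => a \in Ar) s /\ uniq s,
      tl (head arc0 s) = u,
      v \in hds (last arc0 s)
    & forall k, k.+1 < size s -> tl (nth arc0 s k.+1) \in hds (nth arc0 s k)].

Definition acyclic (s : seq harc) : Prop :=
  forall k k', k' < k -> k < size s ->
    tl (nth arc0 s k') \notin hds (nth arc0 s k).

(* A satisfying assignment v yields the path that crosses every variable gadget along
   the side of the literals falsified by v, and then every clause gadget along a
   literal satisfied by v.  It is acyclic because the leaves can be weighted so that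
   the new leaf o of each arc pq|o outweighs p, q and the new leaves of all earlier
   arcs: both heads of an arc contain its new leaf, so neither is the tail of an
   earlier arc.

   Conversely, the nodes met when walking back from c_{m+1}gamma have few and explicit
   in-arcs, so an acyclic path can be traced backwards: for every clause C_j it uses
   an arc c_j x|y of a literal of C_j, before that it visits b_{n+1}b'_{n+1} (once,
   by acyclicity), and before that it crosses every gadget completely along one side.
   Acyclicity also forbids the head xy of c_j x|y to be an earlier tail, so every
   clause is served by a literal on the side not crossed; giving each variable the
   value of its uncrossed side satisfies F. *)

From mathcomp Require Import all_boot finmap zify.

Set Implicit Arguments.
Unset Strict Implicit.
Unset Printing Implicit Defensive.

Lemma pr_inv a b c d : pr a b = pr c d -> (a = c /\ b = d) \/ (a = d /\ b = c).
Proof.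
move=> E.
have /fset2P ha : a \in pr c d by rewrite -E !inE eqxx.
have /fset2P hb : b \in pr c d by rewrite -E !inE eqxx orbT.
have /fset2P hc : c \in pr a b by rewrite E !inE eqxx.
have /fset2P hd : d \in pr a b by rewrite E !inE eqxx orbT.
by case: ha hb hc hd => ? [] ? [] ? [] ?; subst; auto.
Qed.

Lemma pr_neq0 p q : pr p q != fset0.
Proof. by apply/eqP => /fsetP /(_ p); rewrite !inE eqxx. Qed.

Lemma arc_noself p q o : o != p -> o != q -> tl (arc (p, q, o)) \notin hds (arc (p, q, o)).
Proof.
move=> /negPf op /negPf oq; apply/negP => /fset2P[] /pr_inv.
all: by case=> -[? ?]; subst; rewrite eqxx in op oq.
Qed.

Definition lx (b : bool) i j := if b then LX i j else LXb i j.
Definition ly (b : bool) i j := if b then LY i j else LYb i j.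

(* The leaf that the last triple of side b of gadget i pairs with b_{i+1}:
   y_i^m on the positive side but \bar x_i^m on the negative side. *)
Definition lz (b : bool) i j := if b then LY i j else LXb i j.

Inductive R_triple (n : nat) (F : cnf) : triple -> Prop :=
| Rg_enter (b : bool) i : 1 <= i <= n -> R_triple n F (LB i, LB' i, lx b i 1)
| Rg_first (b : bool) i : 1 <= i <= n -> R_triple n F (LB' i, lx b i 1, ly b i 1)
| Rg_stepx (b : bool) i j : 1 <= i <= n -> 1 <= j < size F ->
    R_triple n F (lx b i j, ly b i j, lx b i j.+1)
| Rg_stepy (b : bool) i j : 1 <= i <= n -> 1 <= j < size F ->
    R_triple n F (ly b i j, lx b i j.+1, ly b i j.+1)
| Rg_last (b : bool) i : 1 <= i <= n ->
    R_triple n F (lx b i (size F), ly b i (size F), LB i.+1)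
| Rg_exit (b : bool) i : 1 <= i <= n ->
    R_triple n F (lz b i (size F), LB i.+1, LB' i.+1)
| Rc_enter (b : bool) i j : 1 <= j <= size F -> (i, b) \in nth [::] F j.-1 ->
    R_triple n F (LC j, LD j, lx b i j)
| Rc_lit (b : bool) i j : 1 <= j <= size F -> (i, b) \in nth [::] F j.-1 ->
    R_triple n F (LC j, lx b i j, ly b i j)
| Rc_exit (b : bool) i j : 1 <= j <= size F -> (i, b) \in nth [::] F j.-1 ->
    R_triple n F (LC j, ly b i j, LC j.+1)
| Rc_next j : 1 <= j < size F -> R_triple n F (LC j, LC j.+1, LD j.+1)
| Rk_alpha : R_triple n F (LAlpha, LBeta, LB 1)
| Rk_beta : R_triple n F (LBeta, LB 1, LB' 1)
| Rk_gadgets : R_triple n F (LB n.+1, LB' n.+1, LC 1)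
| Rk_clauses : R_triple n F (LB' n.+1, LC 1, LD 1)
| Rk_gamma : R_triple n F (LC (size F), LC (size F).+1, LGamma).

Lemma R_triple_of_mem n F t : t \in R n F -> R_triple n F t.
Proof.
rewrite /R !mem_cat.
case/or4P.
- case/flatten_mapP => i; rewrite mem_iota => Hi.
  rewrite /pos_gadget !mem_cat !inE; case/or3P.
  + by case/orP => /eqP ->; [apply: (@Rg_enter _ _ true) | apply: (@Rg_first _ _ true)]; lia.
  + case/flatten_mapP => j; rewrite mem_iota => Hj; rewrite !inE.
    by case/orP => /eqP ->; [apply: (@Rg_stepx _ _ true) | apply: (@Rg_stepy _ _ true)]; lia.
  + by case/orP => /eqP ->; [apply: (@Rg_last _ _ true) | apply: (@Rg_exit _ _ true)]; lia.
- case/flatten_mapP => i; rewrite mem_iota => Hi.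
  rewrite /neg_gadget !mem_cat !inE; case/or3P.
  + by case/orP => /eqP ->; [apply: (@Rg_enter _ _ false) | apply: (@Rg_first _ _ false)]; lia.
  + case/flatten_mapP => j; rewrite mem_iota => Hj; rewrite !inE.
    by case/orP => /eqP ->; [apply: (@Rg_stepx _ _ false) | apply: (@Rg_stepy _ _ false)]; lia.
  + by case/orP => /eqP ->; [apply: (@Rg_last _ _ false) | apply: (@Rg_exit _ _ false)]; lia.
- case/flatten_mapP => j; rewrite mem_iota => Hj.
  rewrite /clause_triples mem_cat; case/orP.
  + case/flatten_mapP => -[i b] Hl.
    by case: b Hl => Hl; rewrite /= !inE; case/or3P => /eqP ->;
      [apply: (@Rc_enter _ _ true) | apply: (@Rc_lit _ _ true) | apply: (@Rc_exit _ _ true)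
      |apply: (@Rc_enter _ _ false) | apply: (@Rc_lit _ _ false) | apply: (@Rc_exit _ _ false)];
      (lia || done).
  + by case: ifP => // Hjm; rewrite inE => /eqP ->; apply: Rc_next; lia.
- rewrite /connect_triples !inE.
  by case/orP => [/eqP ->|]; [constructor | case/or4P => /eqP ->; constructor].
Qed.

Lemma mem_of_R_triple n F t : R_triple n F t -> t \in R n F.
Proof.
rewrite /R !mem_cat.
case=> [b i Hi|b i Hi|b i j Hi Hj|b i j Hi Hj|b i Hi|b i Hi
       |b i j Hj Hl|b i j Hj Hl|b i j Hj Hl|j Hj| | | | | ].
1-6: case: b; [apply/or4P; apply: Or41 | apply/or4P; apply: Or42].
1-12: apply/flatten_mapP; exists i; [rewrite mem_iota; lia|].
1-12: rewrite ?/pos_gadget ?/neg_gadget !mem_cat ?inE ?eqxx ?orbT //.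
1-4: apply/or3P; apply: Or32; apply/flatten_mapP; exists j; [rewrite mem_iota; lia|].
1-4: by rewrite !inE eqxx ?orbT.
1-4: apply/or4P; apply: Or43; apply/flatten_mapP; exists j; [rewrite mem_iota; lia|];
  rewrite /clause_triples mem_cat.
1-3: apply/orP; left; apply/flatten_mapP; exists (i, b) => //;
  by case: b Hl => Hl; rewrite /= !inE eqxx ?orbT.
- by apply/orP; right; rewrite ifT ?inE ?eqxx //; lia.
all: by apply/or4P; apply: Or44; rewrite /connect_triples !inE eqxx ?orbT.
Qed.

Lemma R_tripleP n F t : reflect (R_triple n F t) (t \in R n F).
Proof. exact: (iffP idP (@R_triple_of_mem n F t) (@mem_of_R_triple n F t)). Qed.

Lemma R_triple_noself n F t : R_triple n F t -> tl (arc t) \notin hds (arc t).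
Proof.
case=> *; apply: arc_noself; repeat match goal with b : bool |- _ => destruct b end;
  by apply/eqP => E; inversion E; lia.
Qed.

Local Ltac search := first [ done | lia | (exists true; search) | (exists false; search)
  | (eexists; search) | (split; search) | (left; search) | (right; search) ].

Local Ltac in_arcs :=
  let Rt := fresh "Rt" in let Hin := fresh "Hin" in
  move=> Rt Hin; destruct Rt; rewrite /arc /hds /= !inE in Hin;
  repeat match goal with b : bool |- _ => destruct b end; simpl in *;
  case/orP: Hin => /eqP /pr_inv [[E1 E2]|[E1 E2]];
  inversion E1; inversion E2; subst; try search.

Section WeightedChains.
Variable W : leaf -> nat.

Definition wlink : rel triple := fun t t' =>
  [&& tl (arc t') \in hds (arc t), W t.2 < W t'.2, W t'.1.1 < W t'.2 & W t'.1.2 < W t'.2].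

Lemma wlinkI p q o t : pr p q \in hds (arc t) ->
  W t.2 < W o -> W p < W o -> W q < W o -> wlink t (p, q, o).
Proof. by move=> *; apply/and4P. Qed.

(* Both heads of [arc t] contain the leaf [t.2]. *)
Lemma head_tail_weight t t' : tl (arc t') \in hds (arc t) ->
  W t'.1.1 < W t'.2 -> W t'.1.2 < W t'.2 -> W t.2 < W t'.2.
Proof.
case: t t' => [[p q] o] [[p' q'] o'] /= Hin lt1 lt2.
have : o \in pr p' q' by case/fset2P: Hin => ->; rewrite !inE eqxx orbT.
by case/fset2P => ->.
Qed.

Lemma wlink_path x P : path wlink x P ->
  [/\ uniq (map arc P), acyclic (map arc P) &
      forall k, k.+1 < size P -> tl (arc (nth x P k.+1)) \in hds (arc (nth x P k))].
Proof.
move=> /(pathP x) step.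
have link k : k.+1 < size P -> tl (arc (nth x P k.+1)) \in hds (arc (nth x P k)).
  by move=> /step /and4P[].
have below k : k < size P ->
    W (nth x P k).1.1 < W (nth x P k).2 /\ W (nth x P k).1.2 < W (nth x P k).2.
  by move=> /step /and4P[].
have incr k' k : k' < k -> k < size P -> W (nth x P k').2 < W (nth x P k).2.
  elim: k => [//|k IH]; rewrite ltnS leq_eqVlt => /predU1P[-> | lt] ks.
  - by have /and4P[] := step _ ks.
  - by apply: ltn_trans (IH lt (ltnW ks)) _; have /and4P[] := step _ ks.
have no_back k' k : k' < k -> k < size P ->
    tl (arc (nth x P k')) \notin hds (arc (nth x P k)).
  move=> lt ks; apply/negP => /head_tail_weight.
  have [lt1 lt2] := below k' (ltn_trans lt ks).
  by move=> /(_ lt1 lt2); rewrite ltnNge ltnW ?incr.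
split => //.
- (* A repeated arc would make the tail that follows its first occurrence a head
     of its second one. *)
  apply: contraT => /(uniqPn arc0)[k' [k []]]; rewrite size_map => lt ks.
  rewrite !(nth_map x) ?(ltn_trans lt) // => E.
  have := link k' (leq_ltn_trans lt ks); rewrite E.
  move: lt; rewrite leq_eqVlt => /predU1P[-> | lt]; last by rewrite (negPf (no_back _ _ lt ks)).
  have [lt1 lt2] := below _ ks.
  by move=> /head_tail_weight /(_ lt1 lt2); rewrite ltnn.
- move=> k k' lt; rewrite size_map => ks; rewrite !(nth_map x) ?(ltn_trans lt) //.
  exact: no_back.
Qed.

End WeightedChains.

Local Ltac in_hds := rewrite ?inE ?eqxx ?orbT //.

Section AssignmentWalk.
Variables (n : nat) (F : cnf) (v : nat -> bool).
Let m := size F.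

(* Gadget i gets the band of weights [band i, band i.+1); the side that the walk
   takes through it (the literals made false by v) lies in that band, while the
   literals made true by v, left for the clauses, sit in the band of their clause. *)
Definition band i := (2 * m + 2) * i.

Lemma bandS i : band i.+1 = band i + 2 * m + 2.
Proof. rewrite /band mulnS; lia. Qed.

Definition weight (l : leaf) : nat :=
  let K := band n.+1 in
  match l with
  | LX i j => if v i then K + 4 * j else band i + 2 * j
  | LY i j => if v i then K + 4 * j + 1 else band i + 2 * j + 1
  | LXb i j => if v i then band i + 2 * j else K + 4 * j
  | LYb i j => if v i then band i + 2 * j + 1 else K + 4 * j + 1
  | LB i => band i
  | LB' i => band i + 1
  | LC j => K + 4 * j - 2
  | LD j => K + 4 * j - 1
  | LAlpha => 0
  | LBeta => 1
  | LGamma => K + 4 * m.+1 - 1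
  end.

Lemma weight_lx i j : weight (lx (~~ v i) i j) = band i + 2 * j.
Proof. by rewrite /lx; case E: (v i) => /=; rewrite E. Qed.

Lemma weight_ly i j : weight (ly (~~ v i) i j) = band i + 2 * j + 1.
Proof. by rewrite /ly; case E: (v i) => /=; rewrite E. Qed.

Lemma weight_lz i j : weight (lz (~~ v i) i j) <= band i + 2 * j + 1.
Proof. by rewrite /lz; case E: (v i) => /=; rewrite E; lia. Qed.

Lemma weight_lx_true i j b : v i = b -> weight (lx b i j) = band n.+1 + 4 * j.
Proof. by rewrite /lx => <-; case E: (v i) => /=; rewrite E. Qed.

Lemma weight_ly_true i j b : v i = b -> weight (ly b i j) = band n.+1 + 4 * j + 1.
Proof. by rewrite /ly => <-; case E: (v i) => /=; rewrite E. Qed.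

Fixpoint side_walk b i j k : seq triple :=
  if k is k'.+1 then
    [:: (lx b i j, ly b i j, lx b i j.+1), (ly b i j, lx b i j.+1, ly b i j.+1)
      & side_walk b i j.+1 k']
  else [::].

Definition gadget_walk i : seq triple :=
  let b := ~~ v i in
  [:: (LB i, LB' i, lx b i 1), (LB' i, lx b i 1, ly b i 1) & side_walk b i 1 m.-1] ++
  [:: (lx b i m, ly b i m, LB i.+1); (lz b i m, LB i.+1, LB' i.+1)].

Fixpoint gadget_walks i k : seq triple :=
  if k is k'.+1 then gadget_walk i ++ gadget_walks i.+1 k' else [::].

Definition true_literal j : literal :=
  let C := nth [::] F j.-1 in nth (0, true) C (find (fun l : literal => v l.1 == l.2) C).

Definition clause_walk j : seq triple :=
  let: (i, b) := true_literal j in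
  [:: (LC j, LD j, lx b i j), (LC j, lx b i j, ly b i j), (LC j, ly b i j, LC j.+1)
    & if j < m then [:: (LC j, LC j.+1, LD j.+1)] else [::]].

Fixpoint clause_walks j k : seq triple :=
  if k is k'.+1 then clause_walk j ++ clause_walks j.+1 k' else [::].

Definition walk : seq triple :=
  [:: (LAlpha, LBeta, LB 1), (LBeta, LB 1, LB' 1) & gadget_walks 1 n] ++
  [:: (LB n.+1, LB' n.+1, LC 1), (LB' n.+1, LC 1, LD 1) & clause_walks 1 m] ++
  [:: (LC m, LC m.+1, LGamma)].

Hypothesis v_sat : satisfies v F.
Hypothesis F_nonempty : 0 < m.

Lemma true_literalP j : 1 <= j <= m ->
  true_literal j \in nth [::] F j.-1 /\ v (true_literal j).1 = (true_literal j).2.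
Proof.
move=> Hj; have /v_sat[l Hl Hv] : nth [::] F j.-1 \in F by apply: mem_nth; rewrite -/m; lia.
have has_true : has (fun l : literal => v l.1 == l.2) (nth [::] F j.-1).
  by apply/hasP; exists l => //; apply/eqP.
by split; [rewrite /true_literal mem_nth // -has_find | exact/eqP/(nth_find (0, true) has_true)].
Qed.

Lemma side_walk_path i k j x :
  pr (lx (~~ v i) i j) (ly (~~ v i) i j) \in hds (arc x) ->
  weight x.2 = band i + 2 * j + 1 ->
  let c := side_walk (~~ v i) i j k in
  [/\ path (wlink weight) x c,
      pr (lx (~~ v i) i (j + k)) (ly (~~ v i) i (j + k)) \in hds (arc (last x c)) &
      weight (last x c).2 = band i + 2 * (j + k) + 1].
Proof.
elim: k j x => [|k IH] j x Hh Hw /=; first by rewrite !addn0.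
have [P1 P2 P3] := IH j.+1 (ly (~~ v i) i j, lx (~~ v i) i j.+1, ly (~~ v i) i j.+1)
  ltac:(in_hds) ltac:(rewrite /= weight_ly; lia).
rewrite addSnnS in P2 P3; split => //; rewrite P1 andbT.
apply/andP; split; apply: wlinkI => //=; rewrite ?weight_lx ?weight_ly; try lia; in_hds.
Qed.

Lemma gadget_walk_path i x :
  pr (LB i) (LB' i) \in hds (arc x) -> weight x.2 = band i + 1 ->
  path (wlink weight) x (gadget_walk i) /\
  last x (gadget_walk i) = (lz (~~ v i) i m, LB i.+1, LB' i.+1).
Proof.
move=> Hh Hw.
have [C1 C2 C3] := @side_walk_path i m.-1 1 (LB' i, lx (~~ v i) i 1, ly (~~ v i) i 1)
  ltac:(in_hds) ltac:(rewrite /= weight_ly; lia).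
rewrite add1n prednK // in C2 C3.
rewrite /gadget_walk /= cat_path last_cat /=; split => //.
apply/and4P; split => //.
- by apply: wlinkI => //=; rewrite ?weight_lx; lia.
- by apply: wlinkI; [in_hds | rewrite /= ?weight_lx ?weight_ly; lia ..].
- move: C2 C3; case: (last _ _) => [[p q] o] C2 /= C3; rewrite andbT.
  apply/andP; split; apply: wlinkI => //=; rewrite ?weight_lx ?weight_ly ?bandS; try lia.
  + by rewrite /lz /lx /ly; case: (v i) => /=; in_hds.
  + by have := weight_lz i m; lia.
Qed.

Lemma gadget_walks_path k i x :
  pr (LB i) (LB' i) \in hds (arc x) -> weight x.2 = band i + 1 ->
  let c := gadget_walks i k in
  [/\ path (wlink weight) x c, pr (LB (i + k)) (LB' (i + k)) \in hds (arc (last x c)) &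
      weight (last x c).2 = band (i + k) + 1].
Proof.
elim: k i x => [|k IH] i x Hh Hw; first by rewrite /= !addn0.
have [G1 G2] := gadget_walk_path Hh Hw.
have [P1 P2 P3] := IH i.+1 (lz (~~ v i) i m, LB i.+1, LB' i.+1) ltac:(in_hds) erefl.
rewrite addSnnS in P2 P3; cbv zeta.
by rewrite -[gadget_walks i k.+1]/(gadget_walk i ++ _) cat_path last_cat G1 G2.
Qed.

Lemma clause_walks_path k j x : 1 <= j -> j + k = m.+1 -> 0 < k ->
  pr (LC j) (LD j) \in hds (arc x) -> weight x.2 = band n.+1 + 4 * j - 1 ->
  let c := clause_walks j k in
  [/\ path (wlink weight) x c, pr (LC m) (LC m.+1) \in hds (arc (last x c)) &
      weight (last x c).2 = band n.+1 + 4 * m.+1 - 2].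
Proof.
elim: k j x => [//|k IH] j x j1 jk _ Hh Hw.
have [Hmem Hv] := true_literalP (ltac:(lia) : 1 <= j <= m).
cbv zeta; rewrite -[clause_walks j k.+1]/(clause_walk j ++ _) cat_path last_cat /clause_walk.
move: Hmem Hv; case: (true_literal j) => i b /= Hmem Hv.
have wl_x : weight (lx b i j) = band n.+1 + 4 * j := weight_lx_true j Hv.
have wl_y : weight (ly b i j) = band n.+1 + 4 * j + 1 := weight_ly_true j Hv.
have E1 : wlink weight x (LC j, LD j, lx b i j) by apply: wlinkI => //=; lia.
have E2 : wlink weight (LC j, LD j, lx b i j) (LC j, lx b i j, ly b i j).
  by apply: wlinkI; [in_hds | rewrite /=; lia ..].
have E3 : wlink weight (LC j, lx b i j, ly b i j) (LC j, ly b i j, LC j.+1).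
  by apply: wlinkI; [in_hds | rewrite /=; lia ..].
case: (ltnP j m) => jm.
- have E4 : wlink weight (LC j, ly b i j, LC j.+1) (LC j, LC j.+1, LD j.+1).
    by apply: wlinkI; [in_hds | rewrite /=; lia ..].
  have [P1 P2 P3] := IH j.+1 (LC j, LC j.+1, LD j.+1) ltac:(lia) ltac:(lia) ltac:(lia)
    ltac:(in_hds) ltac:(rewrite /=; lia).
  by rewrite /= E1 E2 E3 E4.
- rewrite (_ : k = 0) /=; last by lia.
  rewrite E1 E2 E3 (_ : j = m) /=; last by lia.
  by split; [done | in_hds | lia].
Qed.

Lemma walk_path : path (wlink weight) (LGamma, LAlpha, LBeta) walk.
Proof.
have [G1 G2 G3] := @gadget_walks_path n 1 (LBeta, LB 1, LB' 1) ltac:(in_hds) erefl.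
rewrite add1n in G2 G3.
have [C1 C2 C3] := @clause_walks_path m 1 (LB' n.+1, LC 1, LD 1) (leqnn 1) ltac:(lia)
  F_nonempty ltac:(in_hds) ltac:(rewrite /=; lia).
rewrite /walk /= !cat_path /= !cat_path /= G1 C1 /= !andbT.
apply/and5P; split.
- by apply: wlinkI; [in_hds | rewrite /= /band; lia ..].
- by apply: wlinkI; [in_hds | rewrite /= /band; lia ..].
- move: G2 G3; case: (last _ _) => [[p q] o] G2 /= G3; apply: wlinkI => //=; lia.
- by apply: wlinkI; [in_hds | rewrite /=; lia ..].
- move: C2 C3; case: (last _ _) => [[p q] o] C2 /= C3; apply: wlinkI => //=; lia.
Qed.

Lemma side_walk_R b i j k t : 1 <= i <= n -> 1 <= j -> j + k <= m ->
  t \in side_walk b i j k -> R_triple n F t.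
Proof.
move=> Hi; elim: k j => [//|k IH] j j1 jk; rewrite !in_cons.
by case/or3P => [/eqP -> | /eqP -> | /IH]; [apply: Rg_stepx | apply: Rg_stepy | apply]; lia.
Qed.

Lemma gadget_walk_R i t : 1 <= i <= n -> t \in gadget_walk i -> R_triple n F t.
Proof.
move=> Hi; rewrite /gadget_walk !in_cons mem_cat !in_cons in_nil orbF.
case/or3P => [/eqP -> | /eqP -> | /orP[/side_walk_R | /orP[] /eqP ->]].
- exact: Rg_enter.
- exact: Rg_first.
- by apply; lia.
- exact: Rg_last.
- exact: Rg_exit.
Qed.

Lemma gadget_walks_R k i t : 1 <= i -> i + k <= n.+1 ->
  t \in gadget_walks i k -> R_triple n F t.
Proof.
elim: k i => [//|k IH] i i1 ik; rewrite mem_cat.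
by case/orP => [/gadget_walk_R | /IH]; apply; lia.
Qed.

Lemma clause_walk_R j t : 1 <= j <= m -> t \in clause_walk j -> R_triple n F t.
Proof.
move=> Hj; have [Hmem _] := true_literalP Hj.
rewrite /clause_walk; move: Hmem; case: (true_literal j) => i b /= Hmem.
rewrite !in_cons; case/or4P => [/eqP -> | /eqP -> | /eqP -> | ].
- exact: Rc_enter.
- exact: Rc_lit.
- exact: Rc_exit.
- by case: ifP => // jm; rewrite mem_seq1 => /eqP ->; apply: Rc_next; lia.
Qed.

Lemma clause_walks_R k j t : 1 <= j -> j + k <= m.+1 ->
  t \in clause_walks j k -> R_triple n F t.
Proof.
elim: k j => [//|k IH] j j1 jk; rewrite mem_cat.
by case/orP => [/clause_walk_R | /IH]; apply; lia.
Qed.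

Lemma walk_R t : t \in walk -> R_triple n F t.
Proof.
rewrite /walk !(in_cons, mem_cat) in_nil orbF.
case/or4P => [/eqP -> | /eqP -> | /(gadget_walks_R (leqnn 1) (leqnn _)) // | ];
  try constructor.
by case/or4P => [/eqP -> | /eqP -> | /(clause_walks_R (leqnn 1) (leqnn _)) // | /eqP ->];
  constructor.
Qed.

Lemma satisfying_walk_path :
  exists s, is_path (A n F) s (pr LAlpha LBeta) (pr (LC m.+1) LGamma) /\ acyclic s.
Proof.
have [walk_uniq walk_acyclic walk_link] := wlink_path walk_path.
exists (map arc walk); split => //; split => //.
- by split => //; apply/allP => a /mapP[t /walk_R /R_tripleP Rt ->]; apply: map_f.
- have -> : last arc0 (map arc walk) = arc (LC m, LC m.+1, LGamma).
    by rewrite /walk !map_cat !last_cat.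
  by in_hds.
- move=> k; rewrite size_map => ks; rewrite !(nth_map (LGamma, LAlpha, LBeta)) ?walk_link //.
  exact: ltnW.
Qed.

End AssignmentWalk.

Lemma acyclic_uniq_tails (s : seq harc) :
  (forall k, k.+1 < size s -> tl (nth arc0 s k.+1) \in hds (nth arc0 s k)) ->
  (forall a, a \in s -> tl a \notin hds a) -> acyclic s -> uniq [seq tl a | a <- s].
Proof.
move=> link noself acyc; apply: contraT => /(uniqPn fset0)[k1 [k2 []]].
rewrite size_map => lt k2s; rewrite !(nth_map arc0) ?(ltn_trans lt) //.
case: k2 lt k2s => [//|k] k1k ks E.
suff : tl (nth arc0 s k1) \notin hds (nth arc0 s k) by rewrite E link.
rewrite ltnS leq_eqVlt in k1k; case/predU1P: k1k => [-> | lt].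
- by apply: noself; rewrite mem_nth // ltnW.
- exact: acyc lt (ltnW ks).
Qed.

Local Ltac neq_src := let E := fresh in move=> E; case/pr_inv: E => -[E _];
  repeat match goal with b : bool |- _ => destruct b end; discriminate.

Section Trace.
Variables (n : nat) (F : cnf).
Let m := size F.
Implicit Types (t : triple) (b : bool).

Lemma into_target t : R_triple n F t -> pr (LC m.+1) LGamma \in hds (arc t) ->
  t = (LC m, LC m.+1, LGamma).
Proof. in_arcs. Qed.

Lemma into_CC j t : 1 <= j -> R_triple n F t -> pr (LC j) (LC j.+1) \in hds (arc t) ->
  exists i b, (i, b) \in nth [::] F j.-1 /\ t = (LC j, ly b i j, LC j.+1).
Proof. move=> j1; in_arcs. Qed.

Lemma into_Cy j b i t : R_triple n F t -> pr (LC j) (ly b i j) \in hds (arc t) ->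
  t = (LC j, lx b i j, ly b i j).
Proof. in_arcs. Qed.

Lemma into_Cx j b i t : R_triple n F t -> pr (LC j) (lx b i j) \in hds (arc t) ->
  t = (LC j, LD j, lx b i j).
Proof. in_arcs. Qed.

Lemma into_CD j t : 1 <= j -> R_triple n F t -> pr (LC j) (LD j) \in hds (arc t) ->
  (j = 1 /\ t = (LB' n.+1, LC 1, LD 1)) \/ (1 < j /\ t = (LC j.-1, LC j, LD j)).
Proof. move=> j1; in_arcs. Qed.

Lemma into_B'C t : R_triple n F t -> pr (LB' n.+1) (LC 1) \in hds (arc t) ->
  t = (LB n.+1, LB' n.+1, LC 1).
Proof. in_arcs. Qed.

Lemma into_BB' k t : R_triple n F t -> pr (LB k) (LB' k) \in hds (arc t) ->
  (k = 1 /\ t = (LBeta, LB 1, LB' 1)) \/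
  exists b i, k = i.+1 /\ t = (lz b i m, LB i.+1, LB' i.+1).
Proof. in_arcs. Qed.

Lemma into_zB b i t : R_triple n F t -> pr (lz b i m) (LB i.+1) \in hds (arc t) ->
  t = (lx b i m, ly b i m, LB i.+1).
Proof. in_arcs. Qed.

Lemma into_xy j b i t : 1 <= j -> R_triple n F t -> pr (lx b i j) (ly b i j) \in hds (arc t) ->
  (j = 1 /\ t = (LB' i, lx b i 1, ly b i 1)) \/
  (1 < j /\ t = (ly b i j.-1, lx b i j, ly b i j)) \/ t = (LC j, lx b i j, ly b i j).
Proof. move=> j1; in_arcs. Qed.

Lemma into_yx j b i t : R_triple n F t -> pr (ly b i j) (lx b i j.+1) \in hds (arc t) ->
  t = (lx b i j, ly b i j, lx b i j.+1).
Proof. in_arcs. Qed.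

Lemma into_B'x b i t : R_triple n F t -> pr (LB' i) (lx b i 1) \in hds (arc t) ->
  t = (LB i, LB' i, lx b i 1).
Proof. in_arcs. Qed.

Variable s : seq harc.
Hypothesis s_path : is_path (A n F) s (pr LAlpha LBeta) (pr (LC m.+1) LGamma).
Let tail k := tl (nth arc0 s k).

Lemma tail_size k p q : tail k = pr p q -> k < size s.
Proof.
move=> Ek; rewrite ltnNge; apply/negP => /(nth_default arc0) sk.
by move: (pr_neq0 p q); rewrite -Ek /tail sk eqxx.
Qed.

Lemma arc_at k : k < size s -> exists2 t, R_triple n F t & nth arc0 s k = arc t.
Proof.
case: s_path => _ [/allP sA _] _ _ _ /(mem_nth arc0) /sA /mapP[t /R_tripleP Rt ->].
by exists t.
Qed.

Lemma tail_pred k p q : tail k = pr p q -> pr p q <> pr LAlpha LBeta ->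
  exists k' t, [/\ k = k'.+1, R_triple n F t, nth arc0 s k' = arc t & pr p q \in hds (arc t)].
Proof.
move=> Ek nsrc; have ks := tail_size Ek.
case: s_path => _ _ s0 _ link; case: k Ek ks => [|k] Ek ks.
  by case: nsrc; rewrite -Ek /tail nth0 s0.
have [t Rt Et] := arc_at (ltnW ks).
by exists k, t; split; rewrite // -Et -Ek; apply: link.
Qed.

Lemma tail_pred1 k p q x y z : tail k = pr p q -> pr p q <> pr LAlpha LBeta ->
  (forall t, R_triple n F t -> pr p q \in hds (arc t) -> t = (x, y, z)) ->
  exists k', [/\ k = k'.+1, nth arc0 s k' = arc (x, y, z) & tail k' = pr x y].
Proof.
move=> Ek nsrc into; have [k' [t [-> Rt Et /(into _ Rt) Ext]]] := tail_pred Ek nsrc.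
by exists k'; rewrite /tail Et Ext.
Qed.

Lemma trace_clause k j : 1 <= j -> tail k = pr (LC j) (LC j.+1) ->
  exists i b k', [/\ (i, b) \in nth [::] F j.-1, k = k'.+3,
    nth arc0 s k'.+1 = arc (LC j, lx b i j, ly b i j) & tail k' = pr (LC j) (LD j)].
Proof.
move=> j1 Ek.
have [k1 [t [-> Rt Et Hin]]] := tail_pred Ek ltac:(neq_src).
have [i [b [Hib Et']]] := into_CC j1 Rt Hin.
have Ek1 : tail k1 = pr (LC j) (ly b i j) by rewrite /tail Et Et'.
have [k2 [-> Er Ek2]] := tail_pred1 Ek1 ltac:(neq_src) (@into_Cy _ _ _).
have [k3 [Ek23 _ Ek3]] := tail_pred1 Ek2 ltac:(neq_src) (@into_Cx _ _ _).
by exists i, b, k3; rewrite -Ek23.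
Qed.

Lemma BB'_before_CD j k : 1 <= j -> tail k = pr (LC j) (LD j) ->
  exists2 k', k' < k & tail k' = pr (LB n.+1) (LB' n.+1).
Proof.
elim: j k => [//|j IH] k _ Ek.
have [k1 [t [-> Rt Et Hin]]] := tail_pred Ek ltac:(neq_src).
case: (into_CD (ltn0Sn _) Rt Hin) => -[Ej Et'].
- have Ek1 : tail k1 = pr (LB' n.+1) (LC 1) by rewrite /tail Et Et'.
  have [k2 [-> _ Ek2]] := tail_pred1 Ek1 ltac:(neq_src) (@into_B'C).
  by exists k2.
- have Ek1 : tail k1 = pr (LC j) (LC j.+1) by rewrite /tail Et Et'.
  have [i [b [k2 [_ -> _ Ek2]]]] := trace_clause Ej Ek1.
  have [k' lt Ek'] := IH k2 Ej Ek2.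
  by exists k' => //; lia.
Qed.

Lemma CC_on_path j : 1 <= j <= m -> exists k, tail k = pr (LC j) (LC j.+1).
Proof.
move=> /andP[j1 jm].
suff: forall d, d < m -> exists k, tail k = pr (LC (m - d)) (LC (m - d).+1).
  by move/(_ (m - j) ltac:(lia)); rewrite subKn.
elim=> [|d IH] dm.
- case: s_path => s_nil _ _ s_last _.
  have [t Rt Et] := arc_at (ltac:(rewrite prednK ?lt0n ?size_eq0 //) : (size s).-1 < size s).
  rewrite -nth_last Et in s_last; rewrite (into_target Rt s_last) in Et.
  by exists (size s).-1; rewrite subn0 /tail Et.
- have [k Ek] := IH (ltnW dm).
  rewrite (_ : m - d = (m - d.+1).+1) in Ek; last by lia.
  have [i [b [k' [_ _ _ Ek']]]] := trace_clause (ltn0Sn _) Ek.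
  have [k1 [t [_ Rt Et Hin]]] := tail_pred Ek' ltac:(neq_src).
  case: (into_CD (ltn0Sn _) Rt Hin) => -[Ej Et']; first by lia.
  by exists k1; rewrite /tail Et Et'.
Qed.

Lemma clause_literal_arc j : 1 <= j <= m -> exists i b r, [/\ (i, b) \in nth [::] F j.-1,
  r < size s, nth arc0 s r = arc (LC j, lx b i j, ly b i j)
  & exists2 p, p < r & tail p = pr (LB n.+1) (LB' n.+1)].
Proof.
move=> /[dup] /andP[j1 _] /CC_on_path[k Ek].
have [i [b [k' [Hib Ek'k Er Ek']]]] := trace_clause j1 Ek.
have [p lt Ep] := BB'_before_CD j1 Ek'.
have := tail_size Ek; rewrite Ek'k => ks.
by exists i, b, k'.+1; split => //; [lia | exists p => //; lia].
Qed.

Hypothesis s_acyclic : acyclic s.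

Lemma tail_inj k1 k2 p q : tail k1 = pr p q -> tail k2 = pr p q -> k1 = k2.
Proof.
move=> E1 E2; case: s_path => _ [/allP sA _] _ _ link.
have noself a : a \in s -> tl a \notin hds a.
  by move=> /sA /mapP[t /R_tripleP Rt ->]; exact: R_triple_noself Rt.
have k1s := tail_size E1; have k2s := tail_size E2.
apply/eqP; rewrite -(nth_uniq fset0 _ _ (acyclic_uniq_tails link noself s_acyclic)) ?size_map //.
by rewrite !(nth_map arc0) // -/(tail k1) -/(tail k2) E1 E2.
Qed.

Section Gadgets.
Variable p0 : nat.
Hypothesis tail_p0 : tail p0 = pr (LB n.+1) (LB' n.+1).
Hypothesis F_nonempty : 0 < m.

Definition visited w := has (fun k => tail k == w) (iota 0 p0).

Lemma visitedP w : reflect (exists2 k, k < p0 & tail k = w) (visited w).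
Proof.
apply: (iffP hasP) => -[k].
- by rewrite mem_iota => /andP[_ lt] /eqP Ek; exists k.
- by move=> lt Ek; exists k; rewrite ?mem_iota ?Ek //; lia.
Qed.

Definition side_visited b i := all (fun j => visited (pr (lx b i j) (ly b i j))) (iota 1 m).

Lemma trace_side b i j k : 1 <= j -> k < p0 -> tail k = pr (lx b i j) (ly b i j) ->
  (forall j', 1 <= j' <= j -> visited (pr (lx b i j') (ly b i j'))) /\
  exists2 k', k' < k & tail k' = pr (LB i) (LB' i).
Proof.
elim: j k => [//|j IH] k _ kp0 Ek.
have vis_j : visited (pr (lx b i j.+1) (ly b i j.+1)) by apply/visitedP; exists k.
have [k1 [t [Ek1k Rt Et Hin]]] := tail_pred Ek ltac:(neq_src); subst k.
case: (into_xy (ltn0Sn _) Rt Hin) => [[Ej Et'] | [[Ej Et'] | Et']].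
- have Ek1 : tail k1 = pr (LB' i) (lx b i 1) by rewrite /tail Et Et'.
  have [k2 [? _ Ek2]] := tail_pred1 Ek1 ltac:(neq_src) (@into_B'x _ _); subst k1.
  split; last by exists k2.
  by move=> j' Hj'; rewrite (_ : j' = j.+1) //; lia.
- have Ek1 : tail k1 = pr (ly b i j) (lx b i j.+1) by rewrite /tail Et Et'.
  have [k2 [? _ Ek2]] := tail_pred1 Ek1 ltac:(neq_src) (@into_yx _ _ _); subst k1.
  have [vis [k' lt Ek']] := IH k2 Ej (ltac:(lia)) Ek2.
  split; last by exists k' => //; lia.
  move=> j' Hj'; case: (ltnP j j') => [lt'|le]; last by apply: vis; lia.
  by rewrite (_ : j' = j.+1) //; lia.
- have Ek1 : tail k1 = pr (LC j.+1) (lx b i j.+1) by rewrite /tail Et Et'.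
  have [k2 [? _ Ek2]] := tail_pred1 Ek1 ltac:(neq_src) (@into_Cx _ _ _); subst k1.
  have [p lt Ep] := BB'_before_CD (ltn0Sn _) Ek2.
  by have := tail_inj Ep tail_p0; lia.
Qed.

Lemma trace_gadgets i q : q <= p0 -> tail q = pr (LB i.+1) (LB' i.+1) ->
  forall i', 1 <= i' <= i -> exists b, side_visited b i'.
Proof.
elim: i q => [|i IH] q qp0 Eq i' Hi'; first by lia.
have [k1 [t [? Rt Et Hin]]] := tail_pred Eq ltac:(neq_src); subst q.
case: (into_BB' Rt Hin) => [[//] | [b [_ [[<-] Et']]]].
have Ek1 : tail k1 = pr (lz b i.+1 m) (LB i.+2) by rewrite /tail Et Et'.
have [k2 [? _ Ek2]] := tail_pred1 Ek1 ltac:(neq_src) (@into_zB _ _); subst k1.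
have [vis [k' lt Ek']] := trace_side (k := k2) F_nonempty (ltac:(lia)) Ek2.
case: (ltnP i' i.+1) => [lt'|ge]; first by apply: (IH k') => //; lia.
exists b; rewrite (_ : i' = i.+1); last by lia.
by apply/allP => j; rewrite mem_iota => Hj; apply: vis; lia.
Qed.

End Gadgets.

Lemma acyclic_path_satisfiable : 0 < m -> wf_cnf n F -> exists v, satisfies v F.
Proof.
move=> m0 wfF.
have [_ [_ [_ [_ _ _ [p0 _ Ep0]]]]] := clause_literal_arc (ltac:(lia) : 1 <= 1 <= m).
exists (side_visited p0 false) => C CF.
pose j := (index C F).+1.
have Hj : 1 <= j <= m by rewrite /j index_mem CF.
have [i [b [r [Hib rs Er [p lt Ep]]]]] := clause_literal_arc Hj.
rewrite /j /= nth_index // in Hib; exists (i, b) => //=.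
have {p lt Ep} p0r : p0 < r by rewrite -(tail_inj Ep Ep0).
have unvisited : ~~ side_visited p0 b i.
  apply/negP => /allP /(_ j); rewrite mem_iota add1n ltnS => /(_ Hj).
  move=> /visitedP[k lt Ek]; have := s_acyclic (ltn_trans lt p0r) rs.
  by rewrite Er /= -/(tail k) Ek !inE eqxx orbT.
have [_ _ /(_ _ Hib) /= Hi] := wfF C CF.
have [b' vis] := trace_gadgets Ep0 m0 (leqnn p0) Ep0 Hi.
by case: b unvisited {Hib Er} => /negbTE unvisited //; case: b' vis; rewrite ?unvisited.
Qed.

End Trace.

Theorem lemma1 (n : nat) (F : cnf) :
  0 < size F -> wf_cnf n F ->
  ((exists s : seq harc,
      is_path (A n F) s (pr LAlpha LBeta) (pr (LC (size F).+1) LGamma) /\ acyclic s)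
   <-> exists v : nat -> bool, satisfies v F).
Proof.
move=> F_nonempty wfF; split.
- by case=> s [s_path s_acyclic]; exact: acyclic_path_satisfiable s_path s_acyclic F_nonempty wfF.
- by case=> v v_sat; exact: satisfying_walk_path v_sat F_nonempty.
Qed.
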